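(* Let $\mathcal H$ be a Hilbert space, $(\mathsf H_t)_{t\ge0}$ a strongly continuous semigroup of symmetric operators on $\mathcal H$, $L$ its generator with domain $\mathcal D(L)$, and $\mathbb H_t(u)=(\mathsf H_tu,u)_{\mathcal H}$. Then: (i) if $u\in\mathcal D(L)$, then $\limsup_{t\to0^+}\frac{\mathbb H_0(u)-\mathbb H_t(u)}{t}\le(-Lu,u)_{\mathcal H}$; (ii) if $(t_k)\subset(0,\infty)$ is infinitesimal and $(u_k)\subset\mathcal H$ satisfies $u_k\to u$ in $\mathcal H$ for some $u\in\mathcal D(L)$, then $\liminf_{k\to\infty}\frac{\mathbb H_0(u_k)-\mathbb H_{t_k}(u_k)}{t_k}\ge(-Lu,u)_{\mathcal H}$. Consequently, the functionals $u\mapsto\frac{\mathbb H_0(u)-\mathbb H_t(u)}{t}$ converge as $t\to0^+$ to $u\mapsto(-Lu,u)_{\mathcal H}$ on $\mathcal D(L)$ pointwise and in the $\Gamma$-sense with respect to the strong topology of $\mathcal H$.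
   Context: A strongly continuous semigroup of symmetric operators on $\mathcal H$ is a family $(\mathsf H_t)_{t\ge0}$ of bounded self-adjoint operators with $\mathsf H_0=\mathrm{Id}$, $\mathsf H_{t+s}=\mathsf H_t\mathsf H_s$, $\|\mathsf H_tu\|\le\|u\|$, and $\mathsf H_tu\to u$ as $t\to0^+$ for every $u$. The generator is $Lu=\lim_{t\to0^+}(\mathsf H_tu-u)/t$ (strong limit), with $\mathcal D(L)$ the set of $u$ for which the limit exists. $\Gamma$-convergence on $\mathcal D(L)$: for every infinitesimal $(t_k)$, the liminf inequality of (ii) holds, and for every $u\in\mathcal D(L)$ there are $u_k\in\mathcal D(L)$, $u_k\to u$, with $\limsup$ of the functionals at $(t_k,u_k)$ at most $(-Lu,u)_{\mathcal H}$. *)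

From HB Require Import structures.
From mathcomp Require Import all_boot all_order all_algebra.
From mathcomp Require Import all_classical all_reals all_analysis.
Set Implicit Arguments. Unset Strict Implicit. Unset Printing Implicit Defensive.
Import Order.TTheory GRing.Theory Num.Theory.
Import numFieldNormedType.Exports.
Local Open Scope classical_set_scope.
Local Open Scope ring_scope.

(* A real inner product on a normed space V whose norm is the induced one.
   Together with completeness of V (completeNormedModType) this makes V a
   real Hilbert space. *)
Definition is_inner_product (R : realType) (V : normedModType R)
    (ip : V -> V -> R) : Prop :=
  [/\ (forall x y, ip x y = ip y x),
      (forall (a : R) x y z, ip (a *: x + y) z = a * ip x z + ip y z)
    & (forall x, ip x x = `|x| ^+ 2)].

(* Strongly continuous semigroup of symmetric (self-adjoint) bounded
   operators (H t)_{t >= 0}; only the values H t for t >= 0 matter. *)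
Definition sym_semigroup (R : realType) (V : normedModType R)
    (ip : V -> V -> R) (H : R -> V -> V) : Prop :=
  [/\ (forall t, 0 <= t -> forall (a : R) x y, H t (a *: x + y) = a *: H t x + H t y),
      (forall t, 0 <= t -> forall u v, ip (H t u) v = ip u (H t v)),
      (forall u, H 0 u = u) /\
      (forall t s, 0 <= t -> 0 <= s -> forall u, H (t + s) u = H t (H s u)),
      (forall t, 0 <= t -> forall u, `|H t u| <= `|u|)
    & (forall u, H t u @[t --> 0^'+] --> u)].

Definition gen_quot (R : realType) (V : normedModType R) (H : R -> V -> V)
    (u : V) (t : R) : V := t^-1 *: (H t u - u).

Definition domL (R : realType) (V : normedModType R) (H : R -> V -> V) : set V :=
  [set u | cvg (gen_quot H u @ 0^'+)].

Definition genL (R : realType) (V : normedModType R) (H : R -> V -> V) (u : V) : V :=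
  lim (gen_quot H u @ 0^'+).

Definition bbH (R : realType) (V : normedModType R) (ip : V -> V -> R)
    (H : R -> V -> V) (t : R) (u : V) : R := ip (H t u) u.

Definition Ft (R : realType) (V : normedModType R) (ip : V -> V -> R)
    (H : R -> V -> V) (t : R) (u : V) : R :=
  (bbH ip H 0 u - bbH ip H t u) / t.

Definition gamma_conv_on (R : realType) (V : normedModType R)
    (F : R -> V -> R) (F0 : V -> R) (D : set V) : Prop :=
  forall tk : nat -> R, (forall k, 0 < tk k) -> tk @ \oo --> 0 ->
    (forall (uk : nat -> V) (u : V), D u -> uk @ \oo --> u ->
       (F0 u)%:E <= limn_einf (fun k => (F (tk k) (uk k))%:E))%E /\
    (forall u : V, D u -> exists uk : nat -> V,
       [/\ (forall k, D (uk k)), uk @ \oo --> u &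
           (limn_esup (fun k => (F (tk k) (uk k))%:E) <= (F0 u)%:E)%E]).

(** The functional is [F_t v = (- Q_t v, v)] with [Q_t v = (H_t v - v) / t],
    so on D(L) it converges to [(- L u, u)] by continuity of the inner product;
    this gives (i), the pointwise limit, and the limsup half of
    Gamma-convergence with constant recovery sequences.  For the liminf,
    [(w - H_t w, w) >= 0] since [(H_t w, w) = |H_(t/2) w|^2] and [H_(t/2)] is a
    contraction; for [w = u_k - u] this reads
    [F_t u_k >= 2 (- Q_t u, u_k) - F_t u], whose right-hand side tends to
    [(- L u, u)]. *)
From HB Require Import structures.
From mathcomp Require Import all_boot all_order all_algebra.
From mathcomp Require Import all_classical all_reals all_analysis.
From mathcomp Require Import ring lra.
Set Implicit Arguments. Unset Strict Implicit. Unset Printing Implicit Defensive.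
Import Order.TTheory GRing.Theory Num.Theory.
Import numFieldNormedType.Exports.
Local Open Scope classical_set_scope.
Local Open Scope ring_scope.

Section InnerProduct.
Variables (R : realType) (V : normedModType R) (ip : V -> V -> R).
Hypothesis hip : is_inner_product ip.

Lemma ipC x y : ip x y = ip y x. Proof. by case: hip. Qed.

Lemma ipxx x : ip x x = `|x| ^+ 2. Proof. by case: hip. Qed.

Lemma ipDl x y z : ip (x + y) z = ip x z + ip y z.
Proof. by case: hip => _ ipL _; have := ipL 1 x y z; rewrite scale1r mul1r. Qed.

Lemma ip0l z : ip 0 z = 0.
Proof. by apply/(addrI (ip 0 z)); rewrite addr0 -ipDl addr0. Qed.

Lemma ipZl a x z : ip (a *: x) z = a * ip x z.
Proof. by case: hip => _ ipL _; have := ipL a x 0 z; rewrite addr0 ip0l addr0. Qed.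

Lemma ipNl x z : ip (- x) z = - ip x z.
Proof. by rewrite -scaleN1r ipZl mulN1r. Qed.

Lemma ipDr x y z : ip z (x + y) = ip z x + ip z y.
Proof. by rewrite ipC ipDl !(ipC z). Qed.

Lemma ipNr x z : ip z (- x) = - ip z x.
Proof. by rewrite ipC ipNl ipC. Qed.

Lemma ip_polarization x y : ip x y = (`|x + y| ^+ 2 - `|x - y| ^+ 2) / 4.
Proof. by rewrite -!ipxx !(ipDl, ipNl, ipDr, ipNr) (ipC y x); field. Qed.

Lemma cvg_ip {T : Type} (F : set_system T) {FF : Filter F} (f g : T -> V) x y :
  f @ F --> x -> g @ F --> y -> ip (f t) (g t) @[t --> F] --> ip x y.
Proof.
move=> fx gy; rewrite ip_polarization; under eq_fun do rewrite ip_polarization.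
apply: cvgMr_tmp; apply: cvgB; rewrite expr2; under eq_fun do rewrite expr2.
- by apply: cvgM; apply: cvg_norm; apply: cvgD.
- by apply: cvgM; apply: cvg_norm; apply: cvgB.
Qed.

End InnerProduct.

Lemma cvg_seq_at_right {R : numFieldType} (u : R^nat) p :
  (forall n, p < u n) -> u @ \oo --> p -> u @ \oo --> p^'+.
Proof.
move=> up cvgu A hA.
exact: filterS (fun n (h : p < u n -> A (u n)) => h (up n)) (cvgu _ hA).
Qed.

Lemma cvg_limf_esup_le {R : realType} (F : set_system R) {FF : Filter F}
    (f : R -> R) l :
  f @ F --> l -> (limf_esup (fun t => (f t)%:E) F <= l%:E)%E.
Proof.
move=> /cvgrPdist_le fl; rewrite limf_esupE.
apply/lee_addgt0Pr => e e0.
apply: (@le_trans _ _ (ereal_sup ((fun t => (f t)%:E) @` [set t | f t <= l + e]))).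
  apply: ereal_inf_lbound; exists [set t | f t <= l + e] => //.
  by apply: filterS (fl e e0) => t /=; rewrite ler_norml => /andP[+ _]; lra.
by apply: ge_ereal_sup => _ [t /= ft <-]; rewrite -EFinD lee_fin.
Qed.

Lemma le_limn_einf {R : realType} (u v : (\bar R)^nat) :
  (forall n, u n <= v n)%E -> (limn_einf u <= limn_einf v)%E.
Proof.
move=> uv; rewrite !limn_einf_lim.
apply: lee_lim; [exact: is_cvg_einfs | exact: is_cvg_einfs |].
apply: nearW => n /=; apply: le_ereal_inf_tmp => _ [m /= nm <-].
by apply: le_trans (uv m); apply: ereal_inf_lbound; exists m.
Qed.

Section SymmetricSemigroup.
Variables (R : realType) (V : normedModType R) (ip : V -> V -> R) (H : R -> V -> V).
Hypotheses (hip : is_inner_product ip) (hs : sym_semigroup ip H).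

Lemma semigroupB t : 0 <= t -> forall x y, H t (x - y) = H t x - H t y.
Proof.
case: hs => Hlin _ _ _ _ t0 x y.
by rewrite addrC -scaleN1r Hlin // scaleN1r addrC.
Qed.

Lemma semigroup_sym t : 0 <= t -> forall u v, ip (H t u) v = ip u (H t v).
Proof. by case: hs => _ Hsym _ _ _; exact: Hsym. Qed.

Lemma semigroup0 u : H 0 u = u.
Proof. by case: hs => _ _ [H0 _] _ _; exact: H0. Qed.

Lemma semigroupD t s : 0 <= t -> 0 <= s -> forall u, H (t + s) u = H t (H s u).
Proof. by case: hs => _ _ [_ HD] _ _; exact: HD. Qed.

Lemma semigroup_contraction t : 0 <= t -> forall u, `|H t u| <= `|u|.
Proof. by case: hs => _ _ _ Hcontr _; exact: Hcontr. Qed.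

Lemma ip_semigroup_le t w : 0 <= t -> ip (H t w) w <= `|w| ^+ 2.
Proof.
move=> t0; have t2 : 0 <= t / 2 by rewrite divr_ge0.
rewrite [t](splitr t) semigroupD // semigroup_sym // ipxx // !expr2.
by apply: ler_pM => //; exact: semigroup_contraction.
Qed.

Lemma Ft_gen_quot t v : Ft ip H t v = ip (- gen_quot H v t) v.
Proof.
rewrite /Ft /bbH /gen_quot semigroup0.
by rewrite (ipNl hip) (ipZl hip) (ipDl hip) (ipNl hip) mulrC; ring.
Qed.

Lemma Ft_lower_bound t u v : 0 <= t ->
  2 * ip (- gen_quot H u t) v - Ft ip H t u <= Ft ip H t v.
Proof.
move=> t0.
have hw : 0 <= ip ((v - u) - H t (v - u)) (v - u).
  by rewrite (ipDl hip) (ipNl hip) (ipxx hip) subr_ge0 ip_semigroup_le.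
rewrite semigroupB // !(ipDl hip, ipNl hip, ipDr hip, ipNr hip) in hw.
rewrite (semigroup_sym t0 v u) (ipC hip v (H t u)) (ipC hip v u) in hw.
rewrite !Ft_gen_quot /gen_quot !(ipDl hip, ipNl hip, ipZl hip).
(* The claim is [hw] divided by [t]; at [t = 0] both sides vanish as [0^-1 = 0]. *)
have ti : 0 <= t^-1 by rewrite invr_ge0.
nra.
Qed.

Lemma Ft_cvg u : domL H u -> Ft ip H t u @[t --> 0^'+] --> ip (- genL H u) u.
Proof.
move=> hu; under eq_fun do rewrite Ft_gen_quot.
by apply: (cvg_ip hip); [exact: cvgN | exact: cvg_cst].
Qed.

Lemma Ft_limsup u : domL H u ->
  (limf_esup (fun t => (Ft ip H t u)%:E) 0^'+ <= (ip (- genL H u) u)%:E)%E.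
Proof. by move=> hu; apply: cvg_limf_esup_le; exact: Ft_cvg. Qed.

Lemma Ft_liminf (tk : R^nat) (uk : V^nat) u :
  (forall k, 0 < tk k) -> tk @ \oo --> 0 -> uk @ \oo --> u -> domL H u ->
  ((ip (- genL H u) u)%:E <= limn_einf (fun k => (Ft ip H (tk k) (uk k))%:E))%E.
Proof.
move=> tk_gt0 tk0 ukv hu; have tk0r := cvg_seq_at_right tk_gt0 tk0.
pose lower k := 2 * ip (- gen_quot H u (tk k)) (uk k) - Ft ip H (tk k) u.
have lower_cvg : lower k @[k --> \oo] --> ip (- genL H u) u.
  have -> : ip (- genL H u) u = 2 * ip (- genL H u) u - ip (- genL H u) u by ring.
  apply: cvgB.
    apply: cvgMl_tmp; apply: (cvg_ip hip) => //.
    by apply: cvgN; exact: cvg_comp tk0r hu.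
  exact: cvg_comp tk0r (Ft_cvg hu).
have /cvg_limn_einf_sup[<- _] :
    (fun k => (lower k)%:E) @ \oo --> (ip (- genL H u) u)%:E.
  by apply/fine_cvgP; split; [exact: nearW | exact: lower_cvg].
by apply: le_limn_einf => k; rewrite lee_fin Ft_lower_bound // ltW.
Qed.

Lemma Ft_gamma_conv :
  gamma_conv_on (Ft ip H) (fun u => ip (- genL H u) u) (domL H).
Proof.
move=> tk tk_gt0 tk0; split=> [uk u hu ukv|u hu]; first exact: Ft_liminf.
exists (fun=> u); split=> //; first exact: cvg_cst.
have Ftk_cvg : (fun k => (Ft ip H (tk k) u)%:E) @ \oo --> (ip (- genL H u) u)%:E.
  apply/fine_cvgP; split; first exact: nearW.
  exact: cvg_comp (cvg_seq_at_right tk_gt0 tk0) (Ft_cvg hu).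
by have [_ ->] := cvg_limn_einf_sup Ftk_cvg.
Qed.

End SymmetricSemigroup.

Theorem theorem1p8 (R : realType) (V : completeNormedModType R)
    (ip : V -> V -> R) (H : R -> V -> V) :
  is_inner_product ip -> sym_semigroup ip H ->
  [/\ (* (i) *)
      (forall u : V, domL H u ->
         (limf_esup (fun t => (Ft ip H t u)%:E) 0^'+ <= (ip (- genL H u) u)%:E)%E),
      (* (ii) *)
      (forall (tk : nat -> R) (uk : nat -> V) (u : V),
         (forall k, 0 < tk k) -> tk @ \oo --> 0 ->
         uk @ \oo --> u -> domL H u ->
         ((ip (- genL H u) u)%:E <= limn_einf (fun k => (Ft ip H (tk k) (uk k))%:E))%E),
      (* pointwise convergence on D(L) *)
      (forall u : V, domL H u ->
         Ft ip H t u @[t --> 0^'+] --> ip (- genL H u) u)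
    & (* Gamma-convergence on D(L) *)
      gamma_conv_on (Ft ip H) (fun u => ip (- genL H u) u) (domL H)].
Proof.
move=> hip hs; split.
- exact: Ft_limsup.
- exact: Ft_liminf.
- exact: Ft_cvg.
- exact: Ft_gamma_conv.
Qed.
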